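(* Let $A$ be a nonempty set of positive integers and $n$ a positive integer. Then (a) $\displaystyle\sum_{k=1}^{n}N^p_A(k)\big(q^e_A(n-k)-q^o_A(n-k)\big)=\tau_A(n)$; (b) $\displaystyle\sum_{k=1}^{n}N^q_A(k)\big(p^e_A(n-k)-p^o_A(n-k)\big)=\tau^s_A(n)$.
   Context: For a set $A$ of positive integers: $N^p_A(n)$ (resp. $N^q_A(n)$) is the total number of parts, summed over all partitions (resp. partitions into pairwise distinct parts) of $n$ with all parts in $A$. $p^e_A(n)$ (resp. $p^o_A(n)$) is the number of partitions of $n$ with parts in $A$ having an even (resp. odd) number of parts; $q^e_A(n)$, $q^o_A(n)$ are the analogous counts for partitions into distinct parts from $A$; conventions $p^e_A(0)=q^e_A(0)=1$, $p^o_A(0)=q^o_A(0)=0$. $\tau_A(n)=\#\{a\in A:a\mid n\}$ and $\tau^s_A(n)=\sum_{a\in A,\,a\mid n}(-1)^{n/a-1}$. *)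

From mathcomp Require Import all_boot all_order all_algebra.
Set Implicit Arguments. Unset Strict Implicit. Unset Printing Implicit Defensive.
Import GRing.Theory Num.Theory.

(* A partition of n with parts in A is encoded by its multiplicity function
   m : {0..n} -> {0..n}; m i = multiplicity of the part i.
   Since parts are >= 1, parts and multiplicities are at most n, so this
   encoding is a bijection with partitions of n into parts from A. *)
Definition parts_ok (A : pred nat) (n : nat) (m : {ffun 'I_n.+1 -> 'I_n.+1}) :=
  [forall i : 'I_n.+1, (m i != 0 :> nat) ==> (A i && (0 < i))] &&
  ((\sum_(i < n.+1) i * m i)%N == n).

Definition pset (A : pred nat) (n : nat) : {set {ffun 'I_n.+1 -> 'I_n.+1}} :=
  [set m | parts_ok A m].

Definition qset (A : pred nat) (n : nat) : {set {ffun 'I_n.+1 -> 'I_n.+1}} :=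
  [set m | parts_ok A m && [forall i : 'I_n.+1, (m i <= 1)%N]].

Definition nparts (n : nat) (m : {ffun 'I_n.+1 -> 'I_n.+1}) : nat :=
  (\sum_(i < n.+1) m i)%N.

Definition Np (A : pred nat) (n : nat) : nat :=
  (\sum_(m in pset A n) nparts m)%N.
Definition Nq (A : pred nat) (n : nat) : nat :=
  (\sum_(m in qset A n) nparts m)%N.

Definition pe (A : pred nat) (n : nat) : nat :=
  #|[set m in pset A n | ~~ odd (nparts m)]|.
Definition po (A : pred nat) (n : nat) : nat :=
  #|[set m in pset A n | odd (nparts m)]|.
Definition qe (A : pred nat) (n : nat) : nat :=
  #|[set m in qset A n | ~~ odd (nparts m)]|.
Definition qo (A : pred nat) (n : nat) : nat :=
  #|[set m in qset A n | odd (nparts m)]|.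

(* tau_A(n) = #{a in A : a | n}  (n > 0, so such a lie in [1, n]) *)
Definition tauA (A : pred nat) (n : nat) : nat :=
  (\sum_(1 <= a < n.+1 | A a && (a %| n)) 1)%N.

Definition tausA (A : pred nat) (n : nat) : int :=
  (\sum_(1 <= a < n.+1 | A a && (a %| n)%N) (-1) ^+ (n %/ a).-1)%R.

From mathcomp Require Import all_boot all_order all_algebra ring.
Import GRing.Theory.
Set Implicit Arguments. Unset Strict Implicit.
Local Open Scope ring_scope.

(* With P(x) = prod_(a in A) 1/(1 - x^a), marking the
   multiplicity of one part a shows that sum_k N^p_A(k) x^k is
   sum_(a in A) x^a/(1 - x^a) * P(x), while sum_k (q^e_A(k) - q^o_A(k)) x^k is
   prod_(a in A) (1 - x^a) = 1/P(x).  Their product sum_(a in A) x^a/(1 - x^a)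
   has coefficient tau_A(n) at x^n, which is (a).  For (b) the roles are
   exchanged: the marked series of distinct parts is
   sum_(a in A) x^a/(1 + x^a) * prod_(a in A) (1 + x^a), the signed series of
   all partitions is prod_(a in A) 1/(1 + x^a), and the coefficients of
   sum_(a in A) x^a/(1 + x^a) are tau^s_A(n).  Everything is carried out with
   polynomials truncated at degree n, power series identities becoming
   congruences modulo x^(n+1). *)

Section CongruenceModXn.
Variable R : nzRingType.
Implicit Types p q : {poly R}.

Definition eqmodX n p q := forall i, (i < n)%N -> p`_i = q`_i.

Lemma eqmodX_trans n p q r : eqmodX n p q -> eqmodX n q r -> eqmodX n p r.
Proof. by move=> Epq Eqr i ltin; rewrite Epq ?Eqr. Qed.

Lemma eqmodXD n p1 p2 q1 q2 :
  eqmodX n p1 q1 -> eqmodX n p2 q2 -> eqmodX n (p1 + p2) (q1 + q2).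
Proof. by move=> E1 E2 i ltin; rewrite !coefD E1 ?E2. Qed.

Lemma eqmodXM n p1 p2 q1 q2 :
  eqmodX n p1 q1 -> eqmodX n p2 q2 -> eqmodX n (p1 * p2) (q1 * q2).
Proof.
move=> E1 E2 i ltin; rewrite !coefM; apply: eq_bigr => -[j ltji] _ /=.
by rewrite E1 ?E2 ?(leq_ltn_trans (leq_subr _ _)) ?(leq_trans ltji).
Qed.

Lemma eqmodX_sum n (I : Type) (r : seq I) (P : pred I) (F G : I -> {poly R}) :
  (forall i, P i -> eqmodX n (F i) (G i)) ->
  eqmodX n (\sum_(i <- r | P i) F i) (\sum_(i <- r | P i) G i).
Proof. by move=> EFG; apply: (big_ind2 (eqmodX n)) => // *; apply: eqmodXD. Qed.

Lemma eqmodX_prod n (I : Type) (r : seq I) (P : pred I) (F G : I -> {poly R}) :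
  (forall i, P i -> eqmodX n (F i) (G i)) ->
  eqmodX n (\prod_(i <- r | P i) F i) (\prod_(i <- r | P i) G i).
Proof. by move=> EFG; apply: (big_ind2 (eqmodX n)) => // *; apply: eqmodXM. Qed.

Lemma eqmodX_MXn n p e : (n <= e)%N -> eqmodX n (p * 'X^e) 0.
Proof. by move=> le_ne i ltin; rewrite coefMXn coef0 (leq_trans ltin le_ne). Qed.

Lemma eqmodX_sum_scaleXn n (I : Type) (r : seq I) (P : pred I) (c : I -> R) e :
  (forall i, P i -> (n <= e i)%N) -> eqmodX n (\sum_(i <- r | P i) c i *: 'X^(e i)) 0.
Proof.
move=> le_ne; rewrite -[X in eqmodX _ _ X](big1 (op := +%R) r P (fun=> 0)) //.
by apply: eqmodX_sum => i Pi; rewrite -mul_polyC; apply: eqmodX_MXn; apply: le_ne.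
Qed.

Lemma eqmodX_addMXn n p q e : (n <= e)%N -> eqmodX n (p + q * 'X^e) p.
Proof.
move=> le_ne; rewrite -[X in eqmodX _ _ X]addr0.
by apply: eqmodXD => //; apply: eqmodX_MXn.
Qed.

End CongruenceModXn.

Definition pweight N (m : {ffun 'I_N.+1 -> 'I_N.+1}) : nat :=
  (\sum_(i < N.+1) i * m i)%N.

Section GeneratingPolynomial.
Variable R : comNzRingType.
Implicit Type w : nat -> nat -> R.

Lemma sum_expr_mul1B (x : R) n : (\sum_(j < n) x ^+ j) * (1 - x) = 1 - x ^+ n.
Proof. by rewrite -opprB mulrN mulrC -subrX1 opprB. Qed.

Lemma sum_natr_expr_mul1B (x : R) n :
  (\sum_(j < n) j%:R * x ^+ j) * (1 - x) = \sum_(j < n) x ^+ j.+1 - n%:R * x ^+ n.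
Proof.
elim: n => [|n IHn]; first by rewrite !big_ord0 !mul0r subr0.
by rewrite !big_ord_recr /= mulrDl IHn exprS -natr1; ring.
Qed.

Definition gen_factor w N i : {poly R} := \sum_(j < N.+1) w i j *: 'X^(i * j).
Definition gen_poly w N : {poly R} := \prod_(i < N.+1) gen_factor w N i.

Lemma coef_gen_poly w N k :
  (gen_poly w N)`_k =
  \sum_(m : {ffun 'I_N.+1 -> 'I_N.+1} | pweight m == k) \prod_(i < N.+1) w i (m i).
Proof.
rewrite /gen_poly /gen_factor bigA_distr_bigA coef_sum [RHS]big_mkcond.
apply: eq_bigr => m _; rewrite scaler_prod prodrXr coefZ coefXn eq_sym.
by case: eqP; rewrite ?mulr1 ?mulr0.
Qed.

Lemma gen_factorE w N i :
  gen_factor w N i = (w i 0)%:P + \sum_(j < N) w i j.+1 *: 'X^(i * j.+1).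
Proof. by rewrite /gen_factor big_ord_recl muln0 expr0 alg_polyC. Qed.

Lemma gen_factor_const w N i :
  (forall j, (0 < j)%N -> w i j = 0) -> gen_factor w N i = (w i 0)%:P.
Proof. by move=> wi; rewrite gen_factorE big1 ?addr0 // => j _; rewrite wi ?scale0r. Qed.

Lemma gen_factor_lin w N i : (0 < N)%N ->
  (forall j, (1 < j)%N -> w i j = 0) -> gen_factor w N i = (w i 0)%:P + w i 1 *: 'X^i.
Proof.
case: N => // N _ wi; rewrite gen_factorE big_ord_recl big1 ?addr0 ?muln1 // => j _.
by rewrite wi ?scale0r.
Qed.

Lemma gen_factor_high w N k i :
  (k < i)%N -> eqmodX k.+1 (gen_factor w N i) (w i 0)%:P.
Proof.
move=> lt_ki; rewrite gen_factorE -[X in eqmodX _ _ X]addr0.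
apply: eqmodXD => //; apply: eqmodX_sum_scaleXn => j _.
by rewrite (leq_trans lt_ki) // leq_pmulr.
Qed.

Lemma gen_factor_trunc w N k i : (k <= N)%N ->
  (forall j, (0 < j)%N -> w 0 j = 0) ->
  eqmodX k.+1 (gen_factor w N i) (gen_factor w k i).
Proof.
move=> le_kN w0.
rewrite /gen_factor -!(big_mkord xpredT (fun j => w i j *: 'X^(i * j))).
rewrite (big_cat_nat _ (n := k.+1)) //= -[X in eqmodX _ _ X]addr0.
apply: eqmodXD => //; case: i => [|i].
  rewrite big_nat big1 // => j /andP[lt_kj _].
  by rewrite w0 ?scale0r // (leq_trans _ lt_kj).
rewrite big_nat; apply: eqmodX_sum_scaleXn => j /andP[lt_kj _].
by rewrite (leq_trans lt_kj) ?leq_pmull.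
Qed.

Lemma gen_poly_trunc w N k : (k <= N)%N ->
  (forall j, (0 < j)%N -> w 0 j = 0) -> (forall i, (k < i)%N -> w i 0 = 1) ->
  eqmodX k.+1 (gen_poly w N) (gen_poly w k).
Proof.
move=> le_kN w0 w_high; rewrite /gen_poly -!(big_mkord xpredT (gen_factor w _)).
rewrite (big_cat_nat _ (n := k.+1)) //= -[X in eqmodX _ _ X]mulr1.
apply: eqmodXM; first by apply: eqmodX_prod => i _; apply: gen_factor_trunc.
apply: (@eqmodX_trans _ _ _ (\prod_(k.+1 <= i < N.+1) 1)); last by rewrite big1.
rewrite !big_nat; apply: eqmodX_prod => i /andP[lt_ki _].
by rewrite -polyC1 -(w_high i lt_ki); apply: gen_factor_high.
Qed.

Lemma gen_poly_eqmodX0 w N k i : (k < i <= N)%N -> w i 0 = 0 ->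
  eqmodX k.+1 (gen_poly w N) 0.
Proof.
case/andP=> lt_ki le_iN wi0; pose i' : 'I_N.+1 := Ordinal (le_iN : (i < N.+1)%N).
rewrite /gen_poly (bigD1 i') //=.
rewrite -[X in eqmodX _ _ X](mul0r (\prod_(j < N.+1 | j != i') gen_factor w N j)).
by apply: eqmodXM => //; rewrite -polyC0 -wi0; apply: gen_factor_high.
Qed.

Lemma eqmodX_sum_marked_prod n N
    (F : 'I_N -> 'I_N -> {poly R}) (G Z : 'I_N -> {poly R}) :
  (forall i0 i, i != i0 -> eqmodX n (F i0 i * G i) 1) ->
  (forall i0, eqmodX n (F i0 i0 * G i0) (Z i0)) ->
  eqmodX n (\sum_i0 (\prod_i F i0 i) * \prod_i G i) (\sum_i0 Z i0).
Proof.
move=> EFG_off EFG_diag; apply: eqmodX_sum => i0 _.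
rewrite -big_split (bigD1 i0) //= -[X in eqmodX _ _ X]mulr1.
apply: eqmodXM => //; apply: (@eqmodX_trans _ _ _ (\prod_(i | i != i0) 1)).
  by apply: eqmodX_prod => i; apply: EFG_off.
by rewrite big1.
Qed.

Definition divisor_series (c : nat -> R) a n : {poly R} :=
  \sum_(j < n.+1) c j *: ('X^a) ^+ j.+1.

Lemma coef_divisor_series c a n : (0 < a)%N -> (0 < n)%N ->
  (divisor_series c a n)`_n = if (a %| n)%N then c (n %/ a).-1 else 0.
Proof.
move=> a_gt0 n_gt0; rewrite coef_sum.
under eq_bigr do rewrite -exprM coefZ coefXn mulr_natr mulrb.
rewrite -big_mkcond /=; case: ifP => [dvd_an | ndvd_an]; last first.
  rewrite big_pred0 // => j; apply/negbTE/eqP => def_n.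
  by rewrite def_n dvdn_mulr in ndvd_an.
have q_gt0 : (0 < n %/ a)%N by rewrite divn_gt0 // dvdn_leq.
have lt_qn : ((n %/ a).-1 < n.+1)%N by rewrite ltnS (leq_trans (leq_pred _)) ?leq_div.
rewrite (big_pred1 (Ordinal lt_qn)) // => j /=.
rewrite -{1}(divnK dvd_an) mulnC eqn_pmul2l // -val_eqE /=.
by rewrite -(prednK q_gt0) eqSS eq_sym.
Qed.

Lemma coef_sum_divisor_series (P : pred nat) c n : (0 < n)%N ->
  (forall a, P a -> 0 < a)%N ->
  (\sum_(a < n.+1 | P a) divisor_series c a n)`_n =
  \sum_(1 <= a < n.+1 | P a && (a %| n)%N) c (n %/ a).-1.
Proof.
move=> n_gt0 P_gt0; rewrite coef_sum.
rewrite (eq_bigr (fun a : 'I_n.+1 => if (a %| n)%N then c (n %/ a).-1 else 0));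
  last first.
  by move=> a Pa; apply: coef_divisor_series n_gt0; apply: P_gt0.
rewrite -big_mkcondr.
rewrite -(big_mkord (fun a => P a && (a %| n)%N) (fun a => c (n %/ a).-1)).
by rewrite big_ltn_cond //=; case: ifP => // /andP[/P_gt0].
Qed.

End GeneratingPolynomial.

Lemma prodr_natb (R : comPzSemiRingType) (I : finType) (P : pred I) :
  \prod_(i : I) ((P i)%:R : R) = ([forall i, P i])%:R.
Proof.
have [allP | /forallPn[i /negbTE nPi]] := boolP [forall i, P i].
  by rewrite big1 // => i _; rewrite (forallP allP).
by rewrite (bigD1 i) //= nPi mul0r.
Qed.

Lemma sign_card_diff (R : pzRingType) (T : finType) (X : {set T}) (h : T -> nat) :
  #|[set x in X | ~~ odd (h x)]|%:R - #|[set x in X | odd (h x)]|%:R =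
  \sum_(x in X) (-1) ^+ h x :> R.
Proof.
rewrite (bigID (odd \o h)) /= addrC.
under eq_bigr => x /andP[_ even_hx] do rewrite -signr_odd (negbTE even_hx).
under [X in _ = _ + X]eq_bigr => x /andP[_ odd_hx] do rewrite -signr_odd odd_hx.
by rewrite !sumr_const mulNrn expr0 !cardsE.
Qed.

Section AdmissiblePartitions.
(* [ok i j]: the part [i] may occur with multiplicity [j]. *)
Variable ok : nat -> nat -> bool.

Definition admissible N : {set {ffun 'I_N.+1 -> 'I_N.+1}} :=
  [set m : {ffun 'I_N.+1 -> 'I_N.+1}
     | [forall i : 'I_N.+1, ok i (m i)] && (pweight m == N)].

(* Summed over [i0], weighting part [i0] by its multiplicity counts all parts. *)
Definition mark_weight (i0 : nat) i j : int :=
  (ok i j)%:R * (if i == i0 then j%:R else 1).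
Definition sign_weight i j : int := (ok i j)%:R * (-1) ^+ j.

Lemma sum_admissible (c : nat -> nat -> int) N :
  \sum_(m in admissible N) \prod_(i < N.+1) c i (m i) =
  (gen_poly (fun i j => (ok i j)%:R * c i j) N)`_N.
Proof.
rewrite coef_gen_poly big_mkcond [RHS]big_mkcond; apply: eq_bigr => m _.
rewrite inE big_split /= prodr_natb.
by case: forallP => _; case: eqP; rewrite ?mul1r ?mul0r.
Qed.

Lemma sum_nparts_admissible N :
  (\sum_(m in admissible N) nparts m)%:R =
  \sum_(i0 < N.+1) (gen_poly (mark_weight i0) N)`_N.
Proof.
under [RHS]eq_bigr do rewrite -sum_admissible.
rewrite exchange_big natr_sum; apply: eq_bigr => m _.
rewrite natr_sum; apply: eq_bigr => i0 _.
by rewrite -big_mkcond big_pred1_eq.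
Qed.

Lemma sum_sign_admissible N :
  \sum_(m in admissible N) (-1) ^+ nparts m = (gen_poly sign_weight N)`_N.
Proof. by rewrite -sum_admissible; apply: eq_bigr => m _; rewrite prodrXr. Qed.

Hypothesis ok_mult0 : forall i, ok i 0.
Hypothesis ok_part0 : forall j, (0 < j)%N -> ok 0 j = false.

Lemma coef_gen_sign_weight n k : (k <= n)%N ->
  (gen_poly sign_weight n)`_k = \sum_(m in admissible k) (-1) ^+ nparts m.
Proof.
move=> le_kn; rewrite sum_sign_admissible; apply: gen_poly_trunc => // [j j_gt0 | i _].
  by rewrite /sign_weight ok_part0 ?mul0r.
by rewrite /sign_weight ok_mult0 mul1r.
Qed.

Lemma coef_sum_gen_mark_weight n k : (k <= n)%N ->
  (\sum_(i0 < n.+1) gen_poly (mark_weight i0) n)`_k =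
  (\sum_(m in admissible k) nparts m)%:R.
Proof.
move=> le_kn; rewrite sum_nparts_admissible coef_sum.
rewrite -(big_mkord xpredT (fun i0 => (gen_poly (mark_weight i0) n)`_k)).
rewrite (big_cat_nat _ (n := k.+1)) //= big_mkord [X in _ + X]big_nat.
rewrite [X in _ + X]big1 ?addr0 => [|i0 /andP[lt_ki0 lt_i0n]].
  apply: eq_bigr => i0 _; apply: gen_poly_trunc => // [j j_gt0 | i lt_ki].
    by rewrite /mark_weight ok_part0 ?mul0r.
  by rewrite /mark_weight ok_mult0 mul1r gtn_eqF // (leq_trans _ lt_ki).
rewrite -[RHS](coef0 _ k); apply: (@gen_poly_eqmodX0 _ _ n k i0 _ _ k (ltnSn k)).
  by rewrite lt_ki0.
by rewrite /mark_weight eqxx mulr0.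
Qed.

End AdmissiblePartitions.

Lemma convolution_nparts_sign (ok ok' : nat -> nat -> bool) (P : pred nat)
    (c : nat -> int) n :
  (forall i, ok i 0) -> (forall j, (0 < j)%N -> ok 0 j = false) ->
  (forall i, ok' i 0) -> (forall j, (0 < j)%N -> ok' 0 j = false) ->
  (forall a, P a -> 0 < a)%N -> (0 < n)%N ->
  (forall i0 i, eqmodX n.+1
     (gen_factor (mark_weight ok i0) n i * gen_factor (sign_weight ok') n i)
     (if i == i0 then (if P i then divisor_series c i n else 0) else 1)) ->
  \sum_(1 <= k < n.+1) (\sum_(m in admissible ok k) nparts m)%:R *
                       \sum_(m in admissible ok' (n - k)) (-1) ^+ nparts m =
  \sum_(1 <= a < n.+1 | P a && (a %| n)%N) c (n %/ a).-1.
Proof.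
move=> ok0 ok_0 ok'0 ok'_0 P_gt0 n_gt0 factorE.
pose marked := \sum_(i0 < n.+1) gen_poly (mark_weight ok i0) n.
pose signed := gen_poly (sign_weight ok') n.
transitivity ((marked * signed)`_n).
  rewrite coefM -(big_mkord xpredT (fun k => marked`_k * signed`_(n - k))) big_ltn //.
  have nparts0 : \sum_(m in admissible ok 0) nparts m = 0%N.
    by rewrite big1 // => m _; rewrite /nparts big_ord1; case: (m ord0) => -[].
  rewrite coef_sum_gen_mark_weight // nparts0 mul0r add0r.
  apply: eq_big_nat => k /andP[_ lt_kn].
  rewrite coef_sum_gen_mark_weight; [|exact: ok0|exact: ok_0|by rewrite -ltnS].
  by rewrite coef_gen_sign_weight // leq_subr.
rewrite -coef_sum_divisor_series //.
have congr_marked_signed :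
    eqmodX n.+1 (marked * signed) (\sum_(a < n.+1 | P a) divisor_series c a n).
  rewrite /marked /signed mulr_suml /gen_poly [X in eqmodX _ _ X]big_mkcond /=.
  apply: eqmodX_sum_marked_prod => [i0 i ne_ii0 | i0].
    by have := factorE i0 i; rewrite ifN.
  by have := factorE i0 i0; rewrite eqxx.
exact: congr_marked_signed.
Qed.

Definition is_part (A : pred nat) i := A i && (0 < i)%N.
Definition okp A i j := (j == 0)%N || is_part A i.
Definition okq A i j := (j == 0)%N || is_part A i && (j <= 1)%N.

Lemma psetE A N : pset A N = admissible (okp A) N.
Proof.
apply/setP => m; rewrite !inE /parts_ok; congr (_ && _).
by apply: eq_forallb => i; rewrite implybE negbK.
Qed.

Lemma qsetE A N : qset A N = admissible (okq A) N.
Proof.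
have okqE i j : ((j != 0%N) ==> is_part A i) && (j <= 1)%N = okq A i j.
  by rewrite /okq; case: j => [|[|j]]; rewrite ?andbT ?andbF.
apply/setP => m; rewrite !inE /parts_ok andbAC; congr (_ && _).
apply/andP/forallP => [[/forallP used /forallP small] i | ok_m].
  by rewrite -okqE used small.
by split; apply/forallP => i; have := ok_m i; rewrite -okqE => /andP[].
Qed.

Lemma okp_nonpart A i j : ~~ is_part A i -> okp A i j = (j == 0)%N.
Proof. by rewrite /okp => /negbTE->; rewrite orbF. Qed.

Lemma okq_nonpart A i j : ~~ is_part A i -> okq A i j = (j == 0)%N.
Proof. by rewrite /okq => /negbTE->; rewrite andFb orbF. Qed.

Lemma okp_part0 A j : (0 < j)%N -> okp A 0 j = false.
Proof. by move=> j_gt0; rewrite /okp /is_part andbF orbF gtn_eqF. Qed.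

Lemma okq_part0 A j : (0 < j)%N -> okq A 0 j = false.
Proof. by move=> j_gt0; rewrite /okq /is_part andbF orbF gtn_eqF. Qed.

Lemma gen_factor_mark_sign_unused ok ok' N i0 i :
  (forall j, ok i j = (j == 0)%N) -> (forall j, ok' i j = (j == 0)%N) ->
  gen_factor (mark_weight ok i0) N i * gen_factor (sign_weight ok') N i = (i != i0)%:R.
Proof.
move=> oki ok'i; rewrite !gen_factor_const => [|j j_gt0|j j_gt0]; last 2 first.
- by rewrite /sign_weight ok'i gtn_eqF ?mul0r.
- by rewrite /mark_weight oki gtn_eqF ?mul0r.
by rewrite /mark_weight /sign_weight oki ok'i !mul1r mulr1 -polyC1; case: eqP.
Qed.

Lemma eqmodX_factor_okp_okq A n i0 i : (0 < n)%N ->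
  eqmodX n.+1
    (gen_factor (mark_weight (okp A) i0) n i * gen_factor (sign_weight (okq A)) n i)
    (if i == i0 then (if is_part A i then divisor_series (fun=> 1) i n else 0) else 1).
Proof.
move=> n_gt0; have [Ai | nAi] := boolP (is_part A i); last first.
  rewrite gen_factor_mark_sign_unused => [|j|j]; rewrite ?okp_nonpart ?okq_nonpart //.
  by case: eqP.
have i_gt0 : (0 < i)%N by case/andP: Ai.
have -> : gen_factor (sign_weight (okq A)) n i = 1 - 'X^i.
  rewrite gen_factor_lin // => [|j lt1j]; last first.
    by rewrite /sign_weight /okq Ai gtn_eqF ?(ltnW lt1j) //= leqNgt lt1j mul0r.
  by rewrite /sign_weight /okq Ai /= !mul1r expr1 polyC1 scaleN1r.
rewrite /divisor_series; case: eqP => [<- | /eqP ne_ii0].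
  have -> : gen_factor (mark_weight (okp A) i) n i = \sum_(j < n.+1) j%:R * ('X^i) ^+ j.
    apply: eq_bigr => j _.
    by rewrite /mark_weight /okp Ai orbT mul1r eqxx exprM scaler_nat mulr_natl.
  under [X in eqmodX _ _ X]eq_bigr do rewrite scale1r.
  rewrite sum_natr_expr_mul1B -mulNr -exprM.
  by apply: eqmodX_addMXn; rewrite leq_pmull.
have -> : gen_factor (mark_weight (okp A) i0) n i = \sum_(j < n.+1) ('X^i) ^+ j.
  apply: eq_bigr => j _.
  by rewrite /mark_weight /okp Ai orbT (negbTE ne_ii0) mulr1 scale1r exprM.
rewrite sum_expr_mul1B -exprM -mulN1r.
by apply: eqmodX_addMXn; rewrite leq_pmull.
Qed.

Lemma eqmodX_factor_okq_okp A n i0 i : (0 < n)%N ->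
  eqmodX n.+1
    (gen_factor (mark_weight (okq A) i0) n i * gen_factor (sign_weight (okp A)) n i)
    (if i == i0 then (if is_part A i then divisor_series (fun j => (-1) ^+ j) i n else 0)
     else 1).
Proof.
move=> n_gt0; have [Ai | nAi] := boolP (is_part A i); last first.
  rewrite gen_factor_mark_sign_unused => [|j|j]; rewrite ?okp_nonpart ?okq_nonpart //.
  by case: eqP.
have i_gt0 : (0 < i)%N by case/andP: Ai.
have -> : gen_factor (sign_weight (okp A)) n i = \sum_(j < n.+1) (- 'X^i) ^+ j.
  apply: eq_bigr => j _; rewrite /sign_weight /okp Ai orbT mul1r exprM.
  by rewrite -mul_polyC rmorph_sign -exprNn.
have -> : gen_factor (mark_weight (okq A) i0) n i = (i != i0)%:R%:P + 'X^i.
  rewrite gen_factor_lin // => [|j lt1j]; last first.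
    by rewrite /mark_weight /okq Ai gtn_eqF ?(ltnW lt1j) //= leqNgt lt1j mul0r.
  by rewrite /mark_weight /okq Ai /= !mul1r; case: eqP; rewrite scale1r.
rewrite /divisor_series; case: eqP => _ /=.
  rewrite add0r mulr_sumr.
  rewrite (eq_bigr (fun j : 'I_n.+1 => (-1) ^+ j *: ('X^i) ^+ j.+1)) // => j _.
  by rewrite [in LHS]exprNn -mul_polyC rmorph_sign mulrCA -exprS.
rewrite mulrC -[X in _ * (_ + X)]opprK sum_expr_mul1B exprNn -exprM -mulNr.
by apply: eqmodX_addMXn; rewrite leq_pmull.
Qed.

Lemma sum_part_dvd A n (F : nat -> int) :
  \sum_(1 <= a < n.+1 | is_part A a && (a %| n)%N) F a =
  \sum_(1 <= a < n.+1 | A a && (a %| n)%N) F a.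
Proof.
rewrite big_nat_cond [RHS]big_nat_cond.
by apply: eq_bigl => -[|a]; rewrite //= /is_part andbT.
Qed.

Theorem theorem2 (A : pred nat) (hApos : forall a, A a -> (0 < a)%N)
  (hAne : exists a, A a) (n : nat) (hn : (0 < n)%N) :
  (\sum_(1 <= k < n.+1)
      (Np A k)%:Z * ((qe A (n - k))%:Z - (qo A (n - k))%:Z))%R = (tauA A n)%:Z
  /\
  (\sum_(1 <= k < n.+1)
      (Nq A k)%:Z * ((pe A (n - k))%:Z - (po A (n - k))%:Z))%R = tausA A n.
Proof.
have part_gt0 a : is_part A a -> (0 < a)%N by case/andP.
split.
- rewrite -[(tauA A n)%:Z]natz /tauA natr_sum -(sum_part_dvd A n (fun=> 1)).
  transitivity (\sum_(1 <= k < n.+1) (\sum_(m in admissible (okp A) k) nparts m)%:R *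
                  \sum_(m in admissible (okq A) (n - k)) (-1) ^+ nparts m : int).
    by apply: eq_big_nat => k _; rewrite /Np /qe /qo psetE qsetE -!natz sign_card_diff.
  exact: (convolution_nparts_sign _ (okp_part0 A) _ (okq_part0 A) part_gt0 hn
             (fun i0 i => eqmodX_factor_okp_okq A i0 i hn)).
- rewrite /tausA -sum_part_dvd.
  transitivity (\sum_(1 <= k < n.+1) (\sum_(m in admissible (okq A) k) nparts m)%:R *
                  \sum_(m in admissible (okp A) (n - k)) (-1) ^+ nparts m : int).
    by apply: eq_big_nat => k _; rewrite /Nq /pe /po psetE qsetE -!natz sign_card_diff.
  exact: (convolution_nparts_sign _ (okq_part0 A) _ (okp_part0 A) part_gt0 hn
             (fun i0 i => eqmodX_factor_okq_okp A i0 i hn)).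
Qed.
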